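(* The functor $\mathcal{F}:\mathbf{Cal^0_{Sym}}\to\mathbf{Chu}_{2_0}$ is full and faithful. In particular, for objects $\mathcal{L}_1,\mathcal{L}_2$ of $\mathbf{Cal^0_{Sym}}$, $\mathcal{F}(\mathcal{L}_1)\cong\mathcal{F}(\mathcal{L}_2)$ implies $\mathcal{L}_1\cong\mathcal{L}_2$.
   Context: Lattice notation: $\Sigma,\Sigma'$ atoms and coatoms; $\Sigma[a]$, $\Sigma'[a]$ atoms below / coatoms above $a$; for $f$ between complete lattices $f^\circ(b):=\bigvee\{a;f(a)\le b\}$. $\mathbf{Cal^0_{Sym}}$: objects are complete atomistic coatomistic lattices with $\Sigma[x]\cup\Sigma[y]\ne\Sigma$ for all coatoms $x,y$ and $\Sigma'[p]\cup\Sigma'[q]\ne\Sigma'$ for all atoms $p,q$; arrows are maps preserving arbitrary joins, sending atoms to atoms or $0$, with $f^\circ$ sending coatoms to coatoms or $1$. $\mathbf{Chu}_{2_0}$: objects are triples $(A,r,X)$ with $A,X$ pointed sets (base points $0_A,0_X$) and $r:A\times X\to\{0,1\}$ with $r(a,x)=0$ whenever $a=0_A$ or $x=0_X$; arrows $(A,r,X)\to(B,s,Y)$ are pairs $(f,g)$ of base-point preserving maps $f:A\to B$, $g:Y\to X$ with $s(f(a),y)=r(a,g(y))$ for all $a\in A,y\in Y$. The functor $\mathcal{F}$ sends $\mathcal{L}$ to $(\Sigma\cup\{0\},r,\Sigma'\cup\{1\})$, with $\Sigma\cup\{0\}$ pointed by $0$, $\Sigma'\cup\{1\}$ pointed by $1$,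 and $r(p,x)=0\iff p\le x$; on arrows $\mathcal{F}(f)=(f|_{\Sigma_1\cup\{0\}},f^\circ|_{\Sigma_2'\cup\{1\}})$. *)

Set Implicit Arguments.
Unset Strict Implicit.

Record CLat := {
  car :> Type;
  le : car -> car -> Prop;
  le_refl : forall x, le x x;
  le_trans : forall x y z, le x y -> le y z -> le x z;
  le_anti : forall x y, le x y -> le y x -> x = y;
  sup : (car -> Prop) -> car;
  sup_ub : forall (S : car -> Prop) x, S x -> le x (sup S);
  sup_least : forall (S : car -> Prop) y, (forall x, S x -> le x y) -> le (sup S) y
}.

Arguments le {c} _ _.
Arguments sup {c} _.

Section LatDefs.
Variable L : CLat.

Definition bot : L := sup (fun _ => False).
Definition top : L := sup (fun _ => True).
Definition inf (S : L -> Prop) : L := sup (fun y => forall x, S x -> le y x).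

Definition atom (p : L) : Prop :=
  p <> bot /\ forall x, le x p -> x = bot \/ x = p.
Definition coatom (c : L) : Prop :=
  c <> top /\ forall x, le c x -> x = top \/ x = c.

Definition atomistic : Prop :=
  forall x : L, x = sup (fun p => atom p /\ le p x).
Definition coatomistic : Prop :=
  forall x : L, x = inf (fun c => coatom c /\ le x c).

Definition CalSym : Prop :=
  atomistic /\ coatomistic /\
  (forall x y, coatom x -> coatom y ->
     ~ (forall p, atom p -> le p x \/ le p y)) /\
  (forall p q, atom p -> atom q ->
     ~ (forall c, coatom c -> le p c \/ le q c)).

Lemma bot_le (x : L) : le bot x.
Proof. apply sup_least. intros y H; destruct H. Qed.

Lemma le_top (x : L) : le x top.
Proof. apply sup_ub. exact I. Qed.
End LatDefs.

Arguments bot {L}.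
Arguments top {L}.
Arguments atom {L} _.
Arguments coatom {L} _.

Definition fcirc (L1 L2 : CLat) (f : L1 -> L2) (b : L2) : L1 :=
  sup (fun a => le (f a) b).

Record CalHom (L1 L2 : CLat) := {
  fn :> L1 -> L2;
  fn_join : forall S : L1 -> Prop,
      fn (sup S) = sup (fun y => exists x, S x /\ y = fn x);
  fn_atom : forall p, atom p -> atom (fn p) \/ fn p = bot;
  fn_coatom : forall c, coatom c -> coatom (fcirc fn c) \/ fcirc fn c = top
}.

Definition CalIso (L1 L2 : CLat) : Prop :=
  exists (f : CalHom L1 L2) (g : CalHom L2 L1),
    (forall x, g (f x) = x) /\ (forall y, f (g y) = y).

(* r a x  means  r(a,x) = 1 *)
Record ChuObj := {
  chA : Type;
  chX : Type;
  a0 : chA;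
  x0 : chX;
  rel : chA -> chX -> Prop;
  rel_a0 : forall x, ~ rel a0 x;
  rel_x0 : forall a, ~ rel a x0
}.

Arguments a0 c : clear implicits.
Arguments x0 c : clear implicits.
Arguments rel c _ _ : clear implicits.

Record ChuHom (C D : ChuObj) := {
  fwd : chA C -> chA D;
  bwd : chX D -> chX C;
  fwd0 : fwd (a0 C) = a0 D;
  bwd0 : bwd (x0 D) = x0 C;
  chu_adj : forall a y, rel D (fwd a) y <-> rel C a (bwd y)
}.

(* isomorphism in Chu_{2_0}: composites (f,g);(f',g') = (f' o f, g o g') are identities *)
Definition ChuIso (C D : ChuObj) : Prop :=
  exists (h : ChuHom C D) (k : ChuHom D C),
    (forall a, fwd k (fwd h a) = a) /\ (forall b, fwd h (fwd k b) = b) /\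
    (forall x, bwd h (bwd k x) = x) /\ (forall y, bwd k (bwd h y) = y).

Definition AtomsZ (L : CLat) : Type := { a : L | atom a \/ a = bot }.
Definition CoatomsO (L : CLat) : Type := { x : L | coatom x \/ x = top }.

Definition Fobj (L : CLat) : ChuObj.
Proof.
  refine {| chA := AtomsZ L; chX := CoatomsO L;
            a0 := exist _ bot (or_intror eq_refl);
            x0 := exist _ top (or_intror eq_refl);
            rel := fun a x => ~ le (proj1_sig a) (proj1_sig x) |}.
  - intros x H. apply H. apply bot_le.
  - intros a H. apply H. apply le_top.
Defined.

From Stdlib Require Import Classical ProofIrrelevance.

(* In an atomistic lattice a join-preserving map is determined by its values on
   atoms, which gives faithfulness.  For fullness, a Chu arrow (f, g) is
   extended to all of L1 by x |-> \/ { f a ; a atom below x }.  The Chu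
   condition says that f and g are adjoint between atoms and coatoms, and
   coatomisticity of L2 upgrades this to a Galois connection between the
   extension and g, so the extension preserves joins and has g as its residual
   on coatoms. *)

Section LatticeFacts.
Context {L : CLat}.

Lemma sup_ext (S T : L -> Prop) : (forall x, S x <-> T x) -> sup S = sup T.
Proof.
  intros ST. apply le_anti; apply sup_least; intros x Hx; apply sup_ub, ST, Hx.
Qed.

Lemma sup_principal (b : L) : sup (fun a => le a b) = b.
Proof.
  apply le_anti.
  - apply sup_least. auto.
  - apply sup_ub, le_refl.
Qed.

Lemma le_bot_eq {x : L} : le x bot -> x = bot.
Proof. intros Hx. apply le_anti; [exact Hx | apply bot_le]. Qed.

Lemma atomistic_le (HA : atomistic L) (x y : L) :
  (forall p, atom p -> le p x -> le p y) -> le x y.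
Proof.
  intros H. rewrite (HA x). apply sup_least. intros p [Hp Hpx]. auto.
Qed.

Lemma coatomistic_le (HC : coatomistic L) (x y : L) :
  (forall c, coatom c -> le y c -> le x c) -> le x y.
Proof.
  intros H. rewrite (HC y). apply sup_ub. intros c [Hc Hyc]. auto.
Qed.

Lemma atom_le_eq {p q : L} : atom p -> atom q \/ q = bot -> le p q -> p = q.
Proof.
  intros Hp [Hq | ->] Hpq.
  - destruct (proj2 Hq p Hpq) as [E | E]; [now destruct (proj1 Hp) | exact E].
  - now destruct (proj1 Hp), (le_bot_eq Hpq).
Qed.
End LatticeFacts.

Definition preserves_joins {L1 L2 : CLat} (f : L1 -> L2) : Prop :=
  forall S, f (sup S) = sup (fun y => exists x, S x /\ y = f x).

Lemma id_preserves_joins (L : CLat) : preserves_joins (fun x : L => x).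
Proof.
  intros S. apply sup_ext. intros y. split.
  - intros Sy. now exists y.
  - now intros [x [Sx ->]].
Qed.

Lemma comp_preserves_joins {L1 L2 L3 : CLat} (f : L1 -> L2) (g : L2 -> L3) :
  preserves_joins f -> preserves_joins g -> preserves_joins (fun x => g (f x)).
Proof.
  intros Hf Hg S. rewrite Hf, Hg. apply sup_ext. intros z. split.
  - intros [y [[x [Sx ->]] ->]]. now exists x.
  - intros [x [Sx ->]]. exists (f x). split; [now exists x | reflexivity].
Qed.

Lemma preserves_joins_eq_on_atoms {L1 L2 : CLat} (HA : atomistic L1)
    (f g : L1 -> L2) :
  preserves_joins f -> preserves_joins g ->
  (forall p, atom p -> f p = g p) -> forall x, f x = g x.
Proof.
  intros Hf Hg Efg x. rewrite (HA x), Hf, Hg. apply sup_ext. intros z.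
  split; intros [p [[Hp Hpx] ->]]; exists p; split; auto.
  symmetry. auto.
Qed.

Definition atomZ {L : CLat} {p : L} (Hp : atom p) : AtomsZ L :=
  exist _ p (or_introl Hp).
Definition coatomO {L : CLat} {c : L} (Hc : coatom c) : CoatomsO L :=
  exist _ c (or_introl Hc).

Section Fullness.
Context {L1 L2 : CLat}.
Hypothesis HA1 : atomistic L1.
Hypothesis HC2 : coatomistic L2.
Variable h : ChuHom (Fobj L1) (Fobj L2).

Lemma chu_galois (a : AtomsZ L1) (y : CoatomsO L2) :
  le (proj1_sig (fwd h a)) (proj1_sig y) <-> le (proj1_sig a) (proj1_sig (bwd h y)).
Proof.
  pose proof (chu_adj h a y) as E. simpl in E.
  split; intros H; apply NNPP; intros H'; apply E in H'; contradiction.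
Qed.

Definition chu_extension (x : L1) : L2 :=
  sup (fun z => exists a : AtomsZ L1, le (proj1_sig a) x /\ z = proj1_sig (fwd h a)).

Lemma chu_extension_fwd (a : AtomsZ L1) :
  chu_extension (proj1_sig a) = proj1_sig (fwd h a).
Proof.
  apply le_anti.
  - apply sup_least. intros z [[p [Hp | ->]] [Hpa ->]].
    + destruct a as [q Hq].
      rewrite (subset_eq_compat _ _ _ _ (or_introl Hp) Hq (atom_le_eq Hp Hq Hpa)).
      apply le_refl.
    + change (le (proj1_sig (fwd h (a0 (Fobj L1)))) (proj1_sig (fwd h a))).
      rewrite (fwd0 h). apply bot_le.
  - apply sup_ub. exists a. split; [apply le_refl | reflexivity].
Qed.

Lemma chu_extension_le_coatom (x : L1) (y : CoatomsO L2) :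
  le (chu_extension x) (proj1_sig y) <-> le x (proj1_sig (bwd h y)).
Proof.
  split; intros H.
  - apply atomistic_le; [exact HA1 |]. intros p Hp Hpx.
    apply (chu_galois (atomZ Hp) y). eapply le_trans; [| exact H].
    apply sup_ub. now exists (atomZ Hp).
  - apply sup_least. intros z [a [Hax ->]].
    apply chu_galois. eapply le_trans; eassumption.
Qed.

Lemma chu_extension_preserves_joins : preserves_joins chu_extension.
Proof.
  intros S. apply le_anti.
  - apply sup_least. intros z [a [HaS ->]].
    apply coatomistic_le; [exact HC2 |]. intros c Hc HSc.
    apply (chu_galois a (coatomO Hc)). eapply le_trans; [exact HaS |].
    apply sup_least. intros x Sx.
    apply chu_extension_le_coatom. eapply le_trans; [| exact HSc].
    apply sup_ub. now exists x.
  - apply sup_least. intros y [x [Sx ->]].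
    apply sup_least. intros z [a [Hax ->]].
    apply sup_ub. exists a. split; [| reflexivity].
    eapply le_trans; [exact Hax |]. now apply sup_ub.
Qed.

Lemma chu_extension_residual (y : CoatomsO L2) :
  fcirc chu_extension (proj1_sig y) = proj1_sig (bwd h y).
Proof.
  unfold fcirc. rewrite <- (sup_principal (proj1_sig (bwd h y))).
  apply sup_ext. intros x. apply chu_extension_le_coatom.
Qed.

Definition chu_extension_hom : CalHom L1 L2.
Proof.
  refine {| fn := chu_extension; fn_join := chu_extension_preserves_joins |}.
  - intros p Hp. change p with (proj1_sig (atomZ Hp)).
    rewrite chu_extension_fwd.
    exact (proj2_sig (fwd h (atomZ Hp))).
  - intros c Hc. change c with (proj1_sig (coatomO Hc)).
    rewrite chu_extension_residual.
    exact (proj2_sig (bwd h (coatomO Hc))).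
Defined.

Lemma chu_hom_full : exists f : CalHom L1 L2,
  (forall a, proj1_sig (fwd h a) = f (proj1_sig a)) /\
  (forall y, proj1_sig (bwd h y) = fcirc f (proj1_sig y)).
Proof.
  exists chu_extension_hom. split; intros; symmetry.
  - apply chu_extension_fwd.
  - apply chu_extension_residual.
Qed.
End Fullness.

Lemma cal_inverse_of_chu_inverse {L1 L2 : CLat} (HA1 : atomistic L1)
    {h : ChuHom (Fobj L1) (Fobj L2)} {k : ChuHom (Fobj L2) (Fobj L1)}
    {f : CalHom L1 L2} {g : CalHom L2 L1} :
  (forall a, fwd k (fwd h a) = a) ->
  (forall a, proj1_sig (fwd h a) = f (proj1_sig a)) ->
  (forall b, proj1_sig (fwd k b) = g (proj1_sig b)) ->
  forall x, g (f x) = x.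
Proof.
  intros Ekh Hf Hg.
  apply (preserves_joins_eq_on_atoms HA1 (fun x => g (f x)) (fun x => x)).
  - apply comp_preserves_joins; exact (fn_join _).
  - apply id_preserves_joins.
  - intros p Hp. change p with (proj1_sig (atomZ Hp)).
    now rewrite <- Hf, <- Hg, Ekh.
Qed.

Theorem lemma5p2 (L1 L2 : CLat) (H1 : CalSym L1) (H2 : CalSym L2) :
  (* faithful: F f = F g  implies  f = g *)
  (forall f g : CalHom L1 L2,
      (forall a : chA (Fobj L1), f (proj1_sig a) = g (proj1_sig a)) ->
      (forall y : chX (Fobj L2),
          fcirc f (proj1_sig y) = fcirc g (proj1_sig y)) ->
      forall x, f x = g x) /\
  (* full: every Chu arrow F L1 -> F L2 is F f for some arrow f *)
  (forall h : ChuHom (Fobj L1) (Fobj L2),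
      exists f : CalHom L1 L2,
        (forall a, proj1_sig (fwd h a) = f (proj1_sig a)) /\
        (forall y, proj1_sig (bwd h y) = fcirc f (proj1_sig y))) /\
  (* in particular: F L1 ~= F L2 implies L1 ~= L2 *)
  (ChuIso (Fobj L1) (Fobj L2) -> CalIso L1 L2).
Proof.
  destruct H1 as [HA1 [HC1 _]], H2 as [HA2 [HC2 _]].
  split; [| split].
  - intros f g Efg _.
    apply (preserves_joins_eq_on_atoms HA1); try exact (fn_join _).
    intros p Hp. exact (Efg (atomZ Hp)).
  - exact (chu_hom_full HA1 HC2).
  - intros [h [k [Ekh [Ehk _]]]].
    destruct (chu_hom_full HA1 HC2 h) as [f [Hf _]].
    destruct (chu_hom_full HA2 HC1 k) as [g [Hg _]].
    exists f, g. split.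
    + exact (cal_inverse_of_chu_inverse HA1 Ekh Hf Hg).
    + exact (cal_inverse_of_chu_inverse HA2 Ehk Hg Hf).
Qed.
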